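(* Let $v_{1,1},v_{2,1},w_{1,1},w_{2,1}\in\mathbb R$ satisfy $w_{i,1}>0$, $4v_{i,1}+w_{i,1}>0$ ($i=1,2$), $v_{1,1}v_{2,1}>0$ and $c_2>c_1$, where $c_i:=2v_{i,1}+w_{i,1}$. Then $\omega_-(\vartheta)+\omega_+(2\vartheta)\neq\omega_+(3\vartheta)$ for all $\vartheta\in(-\pi,\pi]$.
   Context: For $\vartheta\in\mathbb R$ define $$\omega_\pm(\vartheta):=\sqrt{\tfrac12\Big(c_1+c_2\pm\sqrt{(c_1-c_2)^2+8v_{1,1}v_{2,1}(\cos\vartheta+1)}\Big)},$$ which are well defined and positive under the stated assumptions. *)

From Stdlib Require Import Reals.
Open Scope R_scope.

Definition cc (v w : R) : R := 2 * v + w.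

Definition omega_plus (v11 v21 w11 w21 theta : R) : R :=
  let c1 := cc v11 w11 in let c2 := cc v21 w21 in
  sqrt ((1/2) * (c1 + c2 + sqrt ((c1 - c2)^2 + 8 * v11 * v21 * (cos theta + 1)))).

Definition omega_minus (v11 v21 w11 w21 theta : R) : R :=
  let c1 := cc v11 w11 in let c2 := cc v21 w21 in
  sqrt ((1/2) * (c1 + c2 - sqrt ((c1 - c2)^2 + 8 * v11 * v21 * (cos theta + 1)))).

(* Write a := c1 + c2, d := c2 - c1, k := 8 v11 v21 and S(u) := sqrt (d^2 + k u), so that
   omega_-(θ)^2 = (a - S(1 + cos θ))/2 and omega_+(θ)^2 = (a + S(1 + cos θ))/2.
   The hypotheses give 0 < k < 2 c1 c2.  Put u_i := 1 + cos (i θ), S_i := S(u_i).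
   If x + y = z with x = omega_-(θ),
   y = omega_+(2θ), z = omega_+(3θ), then z > y forces S3 > S2, and
   2xy <= z^2 - y^2 = (S3 - S2)/2 yields 16 x^2 y^2 <= S3^2 - S2^2 = k (u3 - u2).
   Bounding y^2 >= c2 and x^2 >= (4 c1 c2 - k u1)/(8 c2) from below turns this into
   8 c1 c2 <= k (2 u1 + u3 - u2), and the triple-angle formula shows
   2 u1 + u3 - u2 <= 4, contradicting k < 2 c1 c2. *)

From Stdlib Require Import Reals Lra Psatz.
Open Scope R_scope.

Lemma cos_3a (x : R) : cos (3 * x) = 4 * cos x ^ 3 - 3 * cos x.
Proof.
  replace (3 * x) with (2 * x + x) by ring.
  rewrite cos_plus, sin_2a, cos_2a_cos.
  pose proof (sin2 x) as sin2x; unfold Rsqr in sin2x.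
  replace (2 * sin x * cos x * sin x) with (2 * cos x * (sin x * sin x)) by ring.
  rewrite sin2x; ring.
Qed.

Lemma cos_123_combination_le (x : R) :
  2 * (cos x + 1) + (cos (3 * x) + 1) - (cos (2 * x) + 1) <= 4.
Proof.
  rewrite cos_3a, cos_2a_cos.
  pose proof (COS_bound x) as [_ cos_le1].
  assert (0 <= (1 - cos x) * (4 * cos x ^ 2 + 2 * cos x + 1)) by
    (apply Rmult_le_pos; nra).
  nra.
Qed.

Lemma cc_pos (v w : R) : 0 < w -> 0 < 4 * v + w -> 0 < cc v w.
Proof. unfold cc; lra. Qed.

Lemma coupling_lt_cc (v1 v2 w1 w2 : R) :
  0 < w1 -> 0 < w2 -> 0 < 4 * v1 + w1 -> 0 < 4 * v2 + w2 -> 0 < v1 * v2 ->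
  8 * v1 * v2 < 2 * cc v1 w1 * cc v2 w2.
Proof.
  unfold cc; intros hw1 hw2 h41 h42 hvv.
  destruct (Rle_or_lt 0 v1) as [v1_ge0 | v1_lt0].
  - assert (0 < v2) by nra; nra.
  - assert (v2 < 0) by nra; nra.
Qed.

Definition omega_lo (c1 c2 k u : R) : R :=
  sqrt ((1/2) * (c1 + c2 - sqrt ((c1 - c2)^2 + k * u))).

Definition omega_hi (c1 c2 k u : R) : R :=
  sqrt ((1/2) * (c1 + c2 + sqrt ((c1 - c2)^2 + k * u))).

Section TwoBranches.

Variables c1 c2 k : R.
Hypothesis c1_pos : 0 < c1.
Hypothesis c1_lt_c2 : c1 < c2.
Hypothesis k_pos : 0 < k.
Hypothesis k_lt : k < 2 * c1 * c2.

Let S (u : R) : R := sqrt ((c1 - c2)^2 + k * u).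

Lemma S_sq (u : R) : 0 <= u -> S u ^ 2 = (c1 - c2)^2 + k * u.
Proof. intro u_ge0; apply pow2_sqrt; nra. Qed.

Lemma S_ge (u : R) : 0 <= u -> c2 - c1 <= S u.
Proof.
  intro u_ge0; rewrite <- (sqrt_pow2 (c2 - c1)) by lra.
  apply sqrt_le_1_alt; nra.
Qed.

Lemma S_lt (u : R) : 0 <= u <= 2 -> S u < c1 + c2.
Proof.
  intro u_range; rewrite <- (sqrt_pow2 (c1 + c2)) by lra.
  apply sqrt_lt_1_alt; nra.
Qed.

Lemma omega_lo_sq (u : R) : 0 <= u <= 2 ->
  omega_lo c1 c2 k u ^ 2 = (c1 + c2 - S u) / 2.
Proof.
  intro u_range; pose proof (S_lt u u_range).
  unfold omega_lo; rewrite pow2_sqrt; fold (S u); lra.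
Qed.

Lemma omega_hi_sq (u : R) : 0 <= u ->
  omega_hi c1 c2 k u ^ 2 = (c1 + c2 + S u) / 2.
Proof.
  intro u_ge0; pose proof (sqrt_pos ((c1 - c2)^2 + k * u)).
  unfold omega_hi; rewrite pow2_sqrt; fold (S u) in *; lra.
Qed.

Lemma omega_lo_pos (u : R) : 0 <= u <= 2 -> 0 < omega_lo c1 c2 k u.
Proof.
  intro u_range; pose proof (S_lt u u_range).
  apply sqrt_lt_R0; fold (S u); lra.
Qed.

Lemma omega_hi_sq_ge (u : R) : 0 <= u -> c2 <= omega_hi c1 c2 k u ^ 2.
Proof. intro u_ge0; rewrite omega_hi_sq by lra; pose proof (S_ge u u_ge0); lra. Qed.

Lemma omega_hi_le (u u' : R) : 0 <= u -> u <= u' ->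
  omega_hi c1 c2 k u <= omega_hi c1 c2 k u'.
Proof.
  intros u_ge0 le_uu'.
  apply sqrt_le_1_alt, Rmult_le_compat_l; [lra |].
  apply Rplus_le_compat_l, sqrt_le_1_alt; nra.
Qed.

(* From (a - S)(a + S) = 4 c1 c2 - k u and a + S < 2 a <= 4 c2. *)
Lemma omega_lo_sq_ge (u : R) : 0 <= u <= 2 ->
  4 * c1 * c2 - k * u <= 8 * c2 * omega_lo c1 c2 k u ^ 2.
Proof.
  intro u_range; rewrite omega_lo_sq by lra.
  pose proof (S_sq u (proj1 u_range)); pose proof (S_lt u u_range).
  pose proof (sqrt_pos ((c1 - c2)^2 + k * u)); fold (S u) in *.
  assert (diff_sq : (c1 + c2 - S u) * (c1 + c2 + S u) = 4 * c1 * c2 - k * u) by nra.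
  nra.
Qed.

Lemma omega_hi_add_gap (x u2 u3 : R) : 0 <= x -> 0 <= u2 <= u3 ->
  x + omega_hi c1 c2 k u2 = omega_hi c1 c2 k u3 ->
  16 * x ^ 2 * omega_hi c1 c2 k u2 ^ 2 <= k * (u3 - u2).
Proof.
  intros x_ge0 [u2_ge0 u2_le] sum_eq.
  set (y := omega_hi c1 c2 k u2) in *; set (z := omega_hi c1 c2 k u3) in *.
  assert (y_ge0 : 0 <= y) by apply sqrt_pos.
  assert (y_sq : y ^ 2 = (c1 + c2 + S u2) / 2) by (apply omega_hi_sq; lra).
  assert (z_sq : z ^ 2 = (c1 + c2 + S u3) / 2) by (apply omega_hi_sq; lra).
  pose proof (S_sq u2 u2_ge0); pose proof (S_sq u3 ltac:(lra)).
  pose proof (S_ge u2 u2_ge0).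
  assert (twice_xy : 2 * x * y <= (S u3 - S u2) / 2) by nra.
  assert (xy_ge0 : 0 <= x * y) by nra.
  assert (S_sum_ge : S u3 - S u2 <= S u3 + S u2) by
    (pose proof (sqrt_pos ((c1 - c2)^2 + k * u2)); fold (S u2) in *; lra).
  assert (16 * x ^ 2 * y ^ 2 <= (S u3 - S u2) ^ 2) by nra.
  assert ((S u3 - S u2) ^ 2 <= (S u3 - S u2) * (S u3 + S u2)) by nra.
  nra.
Qed.

Lemma omega_lo_add_hi_ne (u1 u2 u3 : R) :
  0 <= u1 <= 2 -> 0 <= u2 -> 0 <= u3 -> 2 * u1 + u3 - u2 <= 4 ->
  omega_lo c1 c2 k u1 + omega_hi c1 c2 k u2 <> omega_hi c1 c2 k u3.
Proof.
  intros u1_range u2_ge0 u3_ge0 combination sum_eq.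
  pose proof (omega_lo_pos u1 u1_range) as x_pos.
  destruct (Rle_or_lt u3 u2) as [u3_le | u2_lt].
  - pose proof (omega_hi_le u3 u2 u3_ge0 u3_le); lra.
  - pose proof (omega_hi_add_gap _ u2 u3 (Rlt_le _ _ x_pos) ltac:(lra) sum_eq).
    pose proof (omega_hi_sq_ge u2 u2_ge0).
    pose proof (omega_lo_sq_ge u1 u1_range).
    assert (0 <= omega_lo c1 c2 k u1 ^ 2) by nra.
    nra.
Qed.

End TwoBranches.

Theorem mainTheorem4 (v11 v21 w11 w21 : R)
  (hw1 : 0 < w11) (hw2 : 0 < w21)
  (h41 : 0 < 4 * v11 + w11) (h42 : 0 < 4 * v21 + w21)
  (hvv : 0 < v11 * v21)
  (hc : cc v21 w21 > cc v11 w11) :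
  forall theta : R, -PI < theta <= PI ->
    omega_minus v11 v21 w11 w21 theta + omega_plus v11 v21 w11 w21 (2 * theta)
      <> omega_plus v11 v21 w11 w21 (3 * theta).
Proof.
  intros theta _.
  change (omega_lo (cc v11 w11) (cc v21 w21) (8 * v11 * v21) (cos theta + 1)
        + omega_hi (cc v11 w11) (cc v21 w21) (8 * v11 * v21) (cos (2 * theta) + 1)
       <> omega_hi (cc v11 w11) (cc v21 w21) (8 * v11 * v21) (cos (3 * theta) + 1)).
  pose proof (COS_bound theta); pose proof (COS_bound (2 * theta));
    pose proof (COS_bound (3 * theta)).
  apply omega_lo_add_hi_ne.
  - exact (cc_pos _ _ hw1 h41).
  - lra.
  - lra.
  - exact (coupling_lt_cc _ _ _ _ hw1 hw2 h41 h42 hvv).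
  - lra.
  - lra.
  - lra.
  - apply cos_123_combination_le.
Qed.
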